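(* In the database model described in the context, let $\mathbf r=(r_1,\dots,r_N)$ satisfy $P(\mathbf{LR}_{\mathcal D}=\mathbf r)>0$, set $r_0=1$, and let $1\le i\le N$ with $0<\pi_i<1$. Then \[ \frac{P(R=i\mid \mathbf{LR}_{\mathcal D}=\mathbf r)}{P(R\ne i\mid \mathbf{LR}_{\mathcal D}=\mathbf r)}=\frac{r_i\pi_i}{\sum_{k=0,\,k\ne i}^N r_k\pi_k}, \] and, whenever the denominators are nonzero, the likelihood ratio in favour of $R=i$ is \[ \frac{P(\mathbf{LR}_{\mathcal D}=\mathbf r\mid R=i)}{P(\mathbf{LR}_{\mathcal D}=\mathbf r\mid R\ne i)}=\frac{r_i(1-\pi_i)}{\sum_{k=1,\,k\ne i}^N r_k\pi_k+\pi_0}. \]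
   Context: Let $E$ be a countable set and let $S$, $G$ be $E$-valued random variables such that for every $e\in E$, $P(S=e)>0$ implies $P(G=e)>0$. For $e\in E$ define the likelihood ratio $LR(e)=P(S=e)/P(G=e)$ if $P(G=e)>0$ and $LR(e)=0$ otherwise. Database model: fix $N\ge1$. Let $R$ be a random variable with values in $\{0,1,\dots,N\}$; we write $R\in\mathcal D$ for $R\in\{1,\dots,N\}$ and $R\notin\mathcal D$ for $R=0$. Put $\pi_i=P(R=i)$ for $1\le i\le N$, $\pi_{\mathcal D}=\sum_{i=1}^N\pi_i$ and $\pi_0=1-\pi_{\mathcal D}=P(R=0)$. There are $E$-valued random variables $P_1,\dots,P_N$ such that conditionally on $R=i$ with $1\le i\le N$, they are independent, $P_i$ has the distribution of $S$ and $P_j$ ($j\ne i$) has the distribution of $G$; and conditionally on $R=0$ they are independent, each with the distribution of $G$. Set $\mathbf{LR}_{\mathcal D}=(LR(P_1),\dots,LR(P_N))$. *)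

From Stdlib Require Import Reals Classical ClassicalEpsilon Arith.
Open Scope R_scope.

Definition prob_mass (p : nat -> R) : Prop :=
  (forall w, 0 <= p w) /\ infinite_sum p 1.

Definition Prob (p : nat -> R) (A : nat -> Prop) : R :=
  epsilon (inhabits 0)
    (fun l => infinite_sum
       (fun w => if excluded_middle_informative (A w) then p w else 0) l).

Definition CondProb (p : nat -> R) (A B : nat -> Prop) : R :=
  Prob p (fun w => A w /\ B w) / Prob p B.

Definition LR (p : nat -> R) (S G : nat -> nat) (e : nat) : R :=
  if Rlt_dec 0 (Prob p (fun w => G w = e))
  then Prob p (fun w => S w = e) / Prob p (fun w => G w = e)
  else 0.

Fixpoint prod1 (n : nat) (f : nat -> R) : R :=
  match n with O => 1 | S m => prod1 m f * f (S m) end.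
Fixpoint sum1 (n : nat) (f : nat -> R) : R :=
  match n with O => 0 | S m => sum1 m f + f (S m) end.

Definition pi (p : nat -> R) (Rv : nat -> nat) (k : nat) : R :=
  Prob p (fun w => Rv w = k).

(* The database model: R takes values in {0,..,N}; conditionally on R = i
   (1 <= i <= N) the P_1..P_N are independent, P_i ~ S and P_j ~ G (j<>i);
   conditionally on R = 0 they are independent, each ~ G.  In the discrete
   setting this is exactly the product form of the joint law below. *)
Definition database_model (p : nat -> R) (N : nat) (Rv : nat -> nat)
    (Pv : nat -> nat -> nat) (S G : nat -> nat) : Prop :=
  (forall w, (Rv w <= N)%nat) /\
  (forall i, (1 <= i <= N)%nat -> forall e : nat -> nat,
     Prob p (fun w => Rv w = i /\ forall j, (1 <= j <= N)%nat -> Pv j w = e j)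
     = pi p Rv i * prod1 N (fun j => if Nat.eq_dec j i
                                     then Prob p (fun w => S w = e j)
                                     else Prob p (fun w => G w = e j))) /\
  (forall e : nat -> nat,
     Prob p (fun w => Rv w = 0%nat /\ forall j, (1 <= j <= N)%nat -> Pv j w = e j)
     = pi p Rv 0 * prod1 N (fun j => Prob p (fun w => G w = e j))).

Definition LRD_event (p : nat -> R) (S G : nat -> nat) (Pv : nat -> nat -> nat)
    (N : nat) (r : nat -> R) (w : nat) : Prop :=
  forall j, (1 <= j <= N)%nat -> LR p S G (Pv j w) = r j.

(* Write L for the event LR_D = r and g = prod_j P(LR(G) = r_j) = P(L | R = 0).
   The core of the proof is the identity P(R = k, L) = pi_k * r_k * g for
   0 <= k <= N (with r_0 = 1).  Both claims then follow by algebra: the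
   posterior odds reduce to P(R = i, L) / P(R <> i, L), and the likelihood
   ratio is these odds divided by the prior odds pi_i / (1 - pi_i). *)

From Stdlib Require Import Reals Classical ClassicalEpsilon Arith Lra Lia.
Open Scope R_scope.

Lemma infinite_sum_ext (f g : nat -> R) (l : R) :
  (forall n, f n = g n) -> infinite_sum f l -> infinite_sum g l.
Proof.
  intros E H eps He; destruct (H eps He) as [N0 HN]; exists N0; intros n Hn.
  rewrite <- (sum_eq f g n) by (intros; apply E). auto.
Qed.

Lemma infinite_sum_scal (f : nat -> R) (l K : R) :
  infinite_sum f l -> infinite_sum (fun x => K * f x) (K * l).
Proof.
  intros H.
  assert (Hc : Un_cv (fun _ => K) K).
  { intros eps He; exists 0%nat; intros; unfold Rdist; rewrite Rminus_diag, Rabs_R0; lra. }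
  intros eps He. destruct (CV_mult _ _ _ _ Hc H eps He) as [N0 HN]. exists N0; intros n Hn.
  rewrite <- (sum_eq (fun x => f x * K)) by (intros; ring). rewrite <- scal_sum. apply HN; auto.
Qed.

Lemma infinite_sum_of_approx (s : nat -> R) (l : R) :
  (forall n, 0 <= s n) -> (forall n, sum_f_R0 s n <= l) ->
  (forall eps, eps > 0 -> exists n, l - eps < sum_f_R0 s n) -> infinite_sum s l.
Proof.
  intros H0 Hu Ha eps He. destruct (Ha eps He) as [n0 Hn0]. exists n0; intros n Hn.
  assert (sum_f_R0 s n0 <= sum_f_R0 s n).
  { induction Hn; [lra|]. simpl; specialize (H0 (S m)); lra. }
  specialize (Hu n). unfold Rdist; rewrite Rabs_left1; lra.
Qed.

Lemma finite_index_cover (A : nat -> nat -> Prop) (M : nat) :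
  exists n, forall w, (w <= M)%nat -> (exists x, A x w) -> exists x, (x <= n)%nat /\ A x w.
Proof.
  induction M as [|M [n Hn]].
  - destruct (classic (exists x, A x 0%nat)) as [[x Hx]|Hnone].
    + exists x; intros w Hw _; replace w with 0%nat by lia; exists x; auto.
    + exists 0%nat; intros w Hw Hx; replace w with 0%nat in Hx by lia; tauto.
  - destruct (classic (exists x, A x (S M))) as [[x Hx]|Hnone].
    + exists (Nat.max n x); intros w Hw Hex. destruct (Nat.eq_dec w (S M)).
      * subst; exists x; split; auto; lia.
      * destruct (Hn w) as [y [Hy H]]; auto; try lia. exists y; split; auto; lia.
    + exists n; intros w Hw Hex. destruct (Nat.eq_dec w (S M)); [subst; tauto|].
      apply Hn; auto; lia.
Qed.

Section DiscreteProbability.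

Variable p : nat -> R.
Hypothesis p_mass : prob_mass p.

Definition restrict (A : nat -> Prop) (w : nat) : R :=
  if excluded_middle_informative (A w) then p w else 0.

Lemma restrict_bounds (A : nat -> Prop) (w : nat) : 0 <= restrict A w <= p w.
Proof.
  destruct p_mass as [Hp _]; unfold restrict.
  destruct excluded_middle_informative; specialize (Hp w); lra.
Qed.

Lemma restrict_ext (A B : nat -> Prop) (w : nat) :
  (A w <-> B w) -> restrict A w = restrict B w.
Proof. intros H; unfold restrict; do 2 destruct excluded_middle_informative; tauto. Qed.

(* The series defining Prob converges, being dominated by the total mass 1. *)
Lemma Prob_spec (A : nat -> Prop) : infinite_sum (restrict A) (Prob p A).
Proof.
  unfold Prob. apply (epsilon_spec (inhabits 0)
    (fun l => infinite_sum (fun w => if excluded_middle_informative (A w) then p w else 0) l)).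
  destruct (growing_cv (fun n => sum_f_R0 (restrict A) n)) as [l Hl].
  - intro n; simpl; pose proof (restrict_bounds A (S n)); lra.
  - exists 1. intros x [n ->].
    apply Rle_trans with (sum_f_R0 p n).
    + apply sum_Rle; intros; apply restrict_bounds.
    + destruct p_mass as [Hp H1]; apply sum_incr; auto.
  - exists l; exact Hl.
Qed.

Lemma Prob_unique (A : nat -> Prop) (l : R) : infinite_sum (restrict A) l -> Prob p A = l.
Proof. intros H; eapply uniqueness_sum; [apply Prob_spec | exact H]. Qed.

Lemma Prob_ext (A B : nat -> Prop) : (forall w, A w <-> B w) -> Prob p A = Prob p B.
Proof.
  intros H; apply Prob_unique.
  apply infinite_sum_ext with (restrict B); [intro n; apply restrict_ext; symmetry; apply H|].
  apply Prob_spec.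
Qed.

Lemma Prob_nonneg (A : nat -> Prop) : 0 <= Prob p A.
Proof.
  apply Rle_trans with (sum_f_R0 (restrict A) 0); [simpl; apply restrict_bounds|].
  apply sum_incr; [apply Prob_spec | intros; apply restrict_bounds].
Qed.

Lemma Prob_empty : Prob p (fun _ => False) = 0.
Proof.
  apply Prob_unique. intros eps He; exists 0%nat; intros n _.
  rewrite (sum_eq _ (fun _ => 0)) by (intros; unfold restrict; destruct excluded_middle_informative; tauto).
  rewrite sum_cte; unfold Rdist. rewrite Rmult_0_l, Rminus_0_r, Rabs_R0; lra.
Qed.

Lemma Prob_full : Prob p (fun _ => True) = 1.
Proof.
  apply Prob_unique.
  apply infinite_sum_ext with p; [intro n; unfold restrict; destruct excluded_middle_informative; tauto|].
  apply p_mass.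
Qed.

Lemma Prob_disjoint_union (A B : nat -> Prop) : (forall w, A w -> B w -> False) ->
  Prob p (fun w => A w \/ B w) = Prob p A + Prob p B.
Proof.
  intros D; apply Prob_unique.
  apply infinite_sum_ext with (fun n => restrict A n + restrict B n).
  - intro n; unfold restrict; do 3 destruct excluded_middle_informative; try lra; firstorder.
  - intros eps He.
    destruct (CV_plus _ _ _ _ (Prob_spec A) (Prob_spec B) eps He) as [N0 HN].
    exists N0; intros n Hn; rewrite sum_plus; apply HN; auto.
Qed.

Lemma Prob_split (A L : nat -> Prop) :
  Prob p L = Prob p (fun w => A w /\ L w) + Prob p (fun w => ~ A w /\ L w).
Proof.
  rewrite <- Prob_disjoint_union by (intros w [] []; tauto).
  apply Prob_ext; intro w; destruct (classic (A w)); tauto.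
Qed.

Lemma Prob_complement (A : nat -> Prop) : Prob p (fun w => ~ A w) = 1 - Prob p A.
Proof.
  rewrite <- Prob_full, (Prob_split A (fun _ => True)).
  rewrite (Prob_ext (fun w => A w /\ True) A), (Prob_ext (fun w => ~ A w /\ True) (fun w => ~ A w))
    by (intro; tauto).
  ring.
Qed.

Lemma Prob_mono (A B : nat -> Prop) : (forall w, A w -> B w) -> Prob p A <= Prob p B.
Proof.
  intros H. rewrite (Prob_split A B), (Prob_ext (fun w => A w /\ B w) A) by firstorder.
  pose proof (Prob_nonneg (fun w => ~ A w /\ B w)); lra.
Qed.

Lemma Prob_finite_union (A : nat -> nat -> Prop) :
  (forall x y w, A x w -> A y w -> x = y) -> forall n,
  Prob p (fun w => exists x, (x <= n)%nat /\ A x w) = sum_f_R0 (fun x => Prob p (A x)) n.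
Proof.
  intros D n; induction n as [|n IH].
  - apply Prob_ext; intro w; split.
    + intros [x [Hx H]]; replace 0%nat with x by lia; exact H.
    + intros H; exists 0%nat; auto.
  - simpl. rewrite <- IH, <- Prob_disjoint_union.
    + apply Prob_ext; intro w; split.
      * intros [x [Hx H]]. destruct (Nat.eq_dec x (S n)); [subst; right; auto| left; exists x; split; auto; lia].
      * intros [[x [Hx H]]|H]; [exists x; split; auto| exists (S n); auto].
    + intros w [x [Hx H]] H'. specialize (D _ _ _ H H'). lia.
Qed.

Lemma Prob_countable_union (A : nat -> nat -> Prop) :
  (forall x y w, A x w -> A y w -> x = y) ->
  infinite_sum (fun x => Prob p (A x)) (Prob p (fun w => exists x, A x w)).
Proof.
  intros D. apply infinite_sum_of_approx.
  - intros; apply Prob_nonneg.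
  - intro n; rewrite <- Prob_finite_union by auto. apply Prob_mono; firstorder.
  - intros eps He. destruct (Prob_spec (fun w => exists x, A x w) eps He) as [N0 HN].
    specialize (HN N0 (le_n _)). unfold Rdist in HN; apply Rabs_def2 in HN.
    destruct (finite_index_cover A N0) as [n Hn]. exists n.
    rewrite <- Prob_finite_union by auto.
    assert (sum_f_R0 (restrict (fun w => exists x, A x w)) N0 =
            sum_f_R0 (restrict (fun w => exists x, (x <= n)%nat /\ A x w)) N0).
    { apply sum_eq; intros w Hw; apply restrict_ext; split; [apply Hn; auto| firstorder]. }
    pose proof (sum_incr _ N0 _ (Prob_spec (fun w => exists x, (x <= n)%nat /\ A x w))
                  (fun w => proj1 (restrict_bounds _ w))).
    lra.
Qed.

Lemma Prob_by_value (X : nat -> nat) (C : nat -> Prop) :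
  infinite_sum (fun x => Prob p (fun w => C x /\ X w = x)) (Prob p (fun w => C (X w))).
Proof.
  rewrite (Prob_ext (fun w => C (X w)) (fun w => exists x, C x /\ X w = x)).
  - apply Prob_countable_union. intros x y w [_ H1] [_ H2]; congruence.
  - intro w; split; [intro; eexists; split; eauto| intros [x [H1 H2]]; subst; auto].
Qed.

Lemma Prob_range_except (X : nat -> nat) (L : nat -> Prop) (i n : nat) :
  Prob p (fun w => (1 <= X w <= n)%nat /\ X w <> i /\ L w) =
  sum1 n (fun k => if Nat.eq_dec k i then 0 else Prob p (fun w => X w = k /\ L w)).
Proof.
  induction n as [|n IH].
  - simpl. rewrite <- Prob_empty. apply Prob_ext; intro; lia.
  - cbn [sum1]. rewrite <- IH. destruct (Nat.eq_dec (S n) i).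
    + rewrite Rplus_0_r. apply Prob_ext; intro w; split; intros [H1 [H2 H3]]; repeat split; auto; lia.
    + rewrite <- Prob_disjoint_union by (intros w [H1 _] [H2 _]; lia).
      apply Prob_ext; intro w; split.
      * intros [H1 [H2 H3]]. destruct (Nat.eq_dec (X w) (S n)); [right; auto| left; repeat split; auto; lia].
      * intros [[H1 [H2 H3]]|[H1 H2]]; repeat split; auto; lia.
Qed.

Lemma CondProb_odds (A B L : nat -> Prop) : Prob p L <> 0 ->
  CondProb p A L / CondProb p B L =
  Prob p (fun w => A w /\ L w) / Prob p (fun w => B w /\ L w).
Proof.
  intros HL; unfold CondProb, Rdiv. rewrite Rinv_mult, Rinv_inv.
  set (binv := / Prob p (fun w => B w /\ L w)). field. exact HL.
Qed.

Lemma CondProb_likelihood_ratio (A B L : nat -> Prop) : Prob p A <> 0 -> Prob p B <> 0 ->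
  CondProb p L A / CondProb p L B =
  Prob p (fun w => A w /\ L w) / Prob p (fun w => B w /\ L w) * (Prob p B / Prob p A).
Proof.
  intros HA HB; unfold CondProb.
  rewrite (Prob_ext (fun w => L w /\ A w) (fun w => A w /\ L w)),
          (Prob_ext (fun w => L w /\ B w) (fun w => B w /\ L w)) by (intro; tauto).
  unfold Rdiv. rewrite Rinv_mult, Rinv_inv.
  set (binv := / Prob p (fun w => B w /\ L w)). field. auto.
Qed.

End DiscreteProbability.

Lemma prod1_ext (n : nat) (f g : nat -> R) :
  (forall j, (1 <= j <= n)%nat -> f j = g j) -> prod1 n f = prod1 n g.
Proof. induction n; intros H; simpl; auto. f_equal; [apply IHn; intros; apply H; lia| apply H; lia]. Qed.

Lemma sum1_ext (n : nat) (f g : nat -> R) :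
  (forall j, (1 <= j <= n)%nat -> f j = g j) -> sum1 n f = sum1 n g.
Proof. induction n; intros H; simpl; auto. f_equal; [apply IHn; intros; apply H; lia| apply H; lia]. Qed.

Lemma sum1_mult_distr_l (n : nat) (f : nat -> R) (K : R) :
  K * sum1 n f = sum1 n (fun k => K * f k).
Proof. induction n; simpl; [ring| rewrite <- IHn; ring]. Qed.

Lemma prod1_extract (n : nat) (f : nat -> R) (c : nat) : (1 <= c <= n)%nat ->
  prod1 n f = f c * prod1 n (fun j => if Nat.eq_dec j c then 1 else f j).
Proof.
  induction n; intros Hc; [lia|]. cbn [prod1].
  destruct (Nat.eq_dec (S n) c).
  - subst. rewrite (prod1_ext n (fun j => if Nat.eq_dec j (S n) then 1 else f j) f).
    + destruct (Nat.eq_dec (S n) (S n)); [ring|lia].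
    + intros j Hj; destruct Nat.eq_dec; auto; lia.
  - rewrite IHn by lia. destruct (Nat.eq_dec (S n) c); [lia|]. ring.
Qed.

Section ProductFormula.

Variables (p : nat -> R) (N : nat) (Sv G Rv : nat -> nat) (Pv : nat -> nat -> nat).
Hypothesis p_mass : prob_mass p.

Definition coord_law (k j : nat) : nat -> nat := if Nat.eq_dec j k then Sv else G.

Definition joint_event (k : nat) (C : nat -> nat -> Prop) (w : nat) : Prop :=
  Rv w = k /\ forall j, (1 <= j <= N)%nat -> C j (Pv j w).

Definition product_form (k : nat) (C : nat -> nat -> Prop) : Prop :=
  Prob p (joint_event k C) = pi p Rv k * prod1 N (fun j => Prob p (fun w => C j (coord_law k j w))).

Lemma product_form_ext (k : nat) (C C' : nat -> nat -> Prop) :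
  (forall j, (1 <= j <= N)%nat -> forall x, C j x <-> C' j x) ->
  product_form k C -> product_form k C'.
Proof.
  unfold product_form, joint_event; intros HC H.
  rewrite <- (Prob_ext p p_mass (fun w => Rv w = k /\ forall j, (1 <= j <= N)%nat -> C j (Pv j w)))
    by (intro w; split; intros [Hk Hj]; split; auto; intros j Hjn; apply (HC j Hjn); auto).
  rewrite H. f_equal. apply prod1_ext; intros j Hj. apply Prob_ext; auto.
Qed.

(* If the product formula holds whenever the condition on coordinate c is a
   single point, it holds for C: sum over the value x of P_c. *)
Lemma product_form_refine (k c : nat) (C : nat -> nat -> Prop) : (1 <= c <= N)%nat ->
  (forall x, product_form k (fun j => if Nat.eq_dec j c then (fun y => y = x) else C j)) ->
  product_form k C.
Proof.
  intros Hc Hpoint. unfold product_form.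
  set (Cx := fun x j => if Nat.eq_dec j c then (fun y : nat => y = x) else C j).
  set (K := prod1 N (fun j => if Nat.eq_dec j c then 1 else Prob p (fun w => C j (coord_law k j w)))).
  assert (slices : forall w, joint_event k C w <-> exists x, C c x /\ joint_event k (Cx x) w).
  { intro w; unfold joint_event, Cx; split.
    - intros [Hk HC]. exists (Pv c w). split; [apply HC, Hc|]. split; [exact Hk|].
      intros j Hj; destruct (Nat.eq_dec j c) as [->|_]; [reflexivity| apply HC, Hj].
    - intros [x [Hx [Hk HC]]]. split; [exact Hk|]. intros j Hj.
      specialize (HC j Hj); destruct (Nat.eq_dec j c) as [->|_]; [rewrite HC; exact Hx| exact HC]. }
  assert (disjoint : forall x y w, C c x /\ joint_event k (Cx x) w ->
                                   C c y /\ joint_event k (Cx y) w -> x = y).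
  { intros x y w [_ [_ Hx]] [_ [_ Hy]]. specialize (Hx c Hc); specialize (Hy c Hc).
    unfold Cx in Hx, Hy; destruct (Nat.eq_dec c c); [congruence| contradiction]. }
  assert (slice_prob : forall x, Prob p (fun w => C c x /\ joint_event k (Cx x) w)
            = pi p Rv k * K * Prob p (fun w => C c x /\ coord_law k c w = x)).
  { intro x. destruct (classic (C c x)) as [Hx|Hx].
    - rewrite (Prob_ext p p_mass _ (joint_event k (Cx x))) by (intro; tauto).
      assert (Hx_point : product_form k (Cx x)) by apply Hpoint.
      unfold product_form in Hx_point; rewrite Hx_point, (prod1_extract N _ c Hc).
      assert (rest : prod1 N (fun j => if Nat.eq_dec j c then 1
                                       else Prob p (fun w => Cx x j (coord_law k j w))) = K).
      { apply prod1_ext; intros j _; unfold Cx; destruct (Nat.eq_dec j c); reflexivity. }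
      assert (at_c : Prob p (fun w => Cx x c (coord_law k c w))
                     = Prob p (fun w => C c x /\ coord_law k c w = x)).
      { apply Prob_ext; auto; intro w; unfold Cx; destruct (Nat.eq_dec c c); [tauto| contradiction]. }
      rewrite rest, at_c. ring.
    - rewrite (Prob_ext p p_mass (fun w => C c x /\ joint_event k (Cx x) w) (fun _ => False)),
              (Prob_ext p p_mass (fun w => C c x /\ coord_law k c w = x) (fun _ => False)),
              Prob_empty by (auto; intro; tauto).
      symmetry; apply Rmult_0_r. }
  rewrite (Prob_ext p p_mass _ _ slices).
  apply uniqueness_sum with (fun x => Prob p (fun w => C c x /\ joint_event k (Cx x) w)).
  { apply Prob_countable_union; [exact p_mass| exact disjoint]. }
  apply infinite_sum_ext with (fun x => pi p Rv k * K * Prob p (fun w => C c x /\ coord_law k c w = x)).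
  { intro x; symmetry; apply slice_prob. }
  rewrite (prod1_extract N _ c Hc). fold K.
  replace (pi p Rv k * (Prob p (fun w => C c (coord_law k c w)) * K))
    with (pi p Rv k * K * Prob p (fun w => C c (coord_law k c w))) by ring.
  apply infinite_sum_scal, Prob_by_value, p_mass.
Qed.

Hypothesis model : database_model p N Rv Pv Sv G.

Lemma product_form_points (k : nat) (e : nat -> nat) : (k <= N)%nat ->
  product_form k (fun j x => x = e j).
Proof.
  intros Hk; destruct model as [_ [Hpos Hnull]]; unfold product_form, joint_event.
  destruct (Nat.eq_dec k 0) as [->|Hk0].
  - rewrite Hnull. f_equal. apply prod1_ext; intros j Hj; unfold coord_law.
    destruct (Nat.eq_dec j 0); [lia|reflexivity].
  - rewrite (Hpos k ltac:(lia) e). f_equal. apply prod1_ext; intros j _; unfold coord_law.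
    destruct (Nat.eq_dec j k); reflexivity.
Qed.

Lemma product_form_upto (k m : nat) : (k <= N)%nat -> forall (C : nat -> nat -> Prop) e,
  (forall j, (m < j <= N)%nat -> forall x, C j x <-> x = e j) -> product_form k C.
Proof.
  intros Hk; induction m as [|m IH]; intros C e HC.
  - apply product_form_ext with (fun j x => x = e j).
    + intros j Hj x; symmetry; apply HC; lia.
    + apply product_form_points, Hk.
  - destruct (le_lt_dec (S m) N) as [HmN|HmN].
    + apply (product_form_refine k (S m)); [lia|]. intro x.
      apply IH with (fun j => if Nat.eq_dec j (S m) then x else e j).
      intros j Hj y. destruct (Nat.eq_dec j (S m)); [tauto| apply HC; lia].
    + apply IH with e. intros j Hj; lia.
Qed.

Theorem product_formula (k : nat) (C : nat -> nat -> Prop) : (k <= N)%nat -> product_form k C.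
Proof. intros Hk; apply (product_form_upto k N Hk C (fun _ => 0%nat)); intros j Hj; lia. Qed.

End ProductFormula.

Section LikelihoodRatio.

Variables (p : nat -> R) (Sv G : nat -> nat).
Hypothesis p_mass : prob_mass p.
Hypothesis abs_cont : forall e, 0 < Prob p (fun w => Sv w = e) -> 0 < Prob p (fun w => G w = e).

(* P(S = x) = LR(x) P(G = x), using absolute continuity when P(G = x) = 0. *)
Lemma LR_mass (x : nat) : Prob p (fun w => Sv w = x) = LR p Sv G x * Prob p (fun w => G w = x).
Proof.
  unfold LR; destruct Rlt_dec as [Hlt|Hnlt]; [field; lra|].
  pose proof (Prob_nonneg p p_mass (fun w => Sv w = x)) as HS.
  destruct HS as [HS|HS]; [exfalso; apply Hnlt, abs_cont, HS| rewrite <- HS; ring].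
Qed.

(* P(LR(S) = c) = c * P(LR(G) = c): sum the identity of LR_mass over the
   values x with LR(x) = c. *)
Lemma Prob_LR_source (c : R) :
  Prob p (fun w => LR p Sv G (Sv w) = c) = c * Prob p (fun w => LR p Sv G (G w) = c).
Proof.
  apply uniqueness_sum with (fun x => Prob p (fun w => LR p Sv G x = c /\ Sv w = x)).
  { apply Prob_by_value, p_mass. }
  apply infinite_sum_ext with (fun x => c * Prob p (fun w => LR p Sv G x = c /\ G w = x)).
  2: apply infinite_sum_scal, Prob_by_value, p_mass.
  intro x. destruct (classic (LR p Sv G x = c)) as [Hc|Hc].
  - rewrite (Prob_ext p p_mass (fun w => LR p Sv G x = c /\ G w = x) (fun w => G w = x)),
            (Prob_ext p p_mass (fun w => LR p Sv G x = c /\ Sv w = x) (fun w => Sv w = x))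
      by (intro; tauto).
    rewrite LR_mass, Hc; reflexivity.
  - rewrite (Prob_ext p p_mass (fun w => LR p Sv G x = c /\ Sv w = x) (fun _ => False)),
            (Prob_ext p p_mass (fun w => LR p Sv G x = c /\ G w = x) (fun _ => False)),
            Prob_empty by (auto; intro; tauto).
    ring.
Qed.

End LikelihoodRatio.

Section DatabaseModel.

Variables (p : nat -> R) (N : nat) (Sv G Rv : nat -> nat) (Pv : nat -> nat -> nat) (r : nat -> R).
Hypothesis p_mass : prob_mass p.
Hypothesis abs_cont : forall e, 0 < Prob p (fun w => Sv w = e) -> 0 < Prob p (fun w => G w = e).
Hypothesis model : database_model p N Rv Pv Sv G.

(* g = P(LR_D = r | R = 0) = prod_j P(LR(G) = r_j). *)
Definition null_likelihood : R := prod1 N (fun j => Prob p (fun w => LR p Sv G (G w) = r j)).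

Lemma Prob_R_and_LRD (k : nat) : (k <= N)%nat ->
  Prob p (fun w => Rv w = k /\ LRD_event p Sv G Pv N r w) =
  pi p Rv k * (if Nat.eq_dec k 0 then 1 else r k) * null_likelihood.
Proof.
  intros Hk.
  pose proof (product_formula p N Sv G Rv Pv p_mass model k (fun j x => LR p Sv G x = r j) Hk) as H.
  unfold product_form, joint_event in H. unfold LRD_event. rewrite H.
  unfold null_likelihood; destruct (Nat.eq_dec k 0) as [->|Hk0].
  - rewrite Rmult_1_r. f_equal. apply prod1_ext; intros j Hj.
    unfold coord_law; destruct (Nat.eq_dec j 0); [lia|reflexivity].
  - rewrite (prod1_extract N (fun j => Prob p (fun w => LR p Sv G (coord_law Sv G k j w) = r j)) k),
            (prod1_extract N (fun j => Prob p (fun w => LR p Sv G (G w) = r j)) k) by lia.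
    unfold coord_law at 1; destruct (Nat.eq_dec k k) as [_|]; [|congruence].
    rewrite Prob_LR_source by auto.
    rewrite (prod1_ext N _ (fun j => if Nat.eq_dec j k then 1 else Prob p (fun w => LR p Sv G (G w) = r j))).
    + ring.
    + intros j _; unfold coord_law; destruct (Nat.eq_dec j k); reflexivity.
Qed.

Lemma Prob_not_R_and_LRD (i : nat) : (1 <= i <= N)%nat ->
  Prob p (fun w => Rv w <> i /\ LRD_event p Sv G Pv N r w) =
  null_likelihood * (pi p Rv 0 + sum1 N (fun k => if Nat.eq_dec k i then 0 else r k * pi p Rv k)).
Proof.
  intros Hi. set (L := LRD_event p Sv G Pv N r). destruct model as [HR _].
  rewrite (Prob_ext p p_mass _ (fun w => (Rv w = 0%nat /\ L w) \/ ((1 <= Rv w <= N)%nat /\ Rv w <> i /\ L w))).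
  2: { intro w; specialize (HR w); split.
       - intros [H1 H2]; destruct (Nat.eq_dec (Rv w) 0); [left| right]; repeat split; auto; lia.
       - intros [[H1 H2]|[H1 [H2 H3]]]; split; auto; lia. }
  rewrite Prob_disjoint_union, Prob_range_except by (auto; intros w [H1 _] [H2 _]; lia).
  unfold L; rewrite Prob_R_and_LRD by lia.
  rewrite Rmult_plus_distr_l, sum1_mult_distr_l. destruct (Nat.eq_dec 0 0); [|lia]. f_equal; [ring|].
  apply sum1_ext; intros k Hk. destruct (Nat.eq_dec k i); [ring|].
  rewrite Prob_R_and_LRD by lia. destruct (Nat.eq_dec k 0); [lia|ring].
Qed.

End DatabaseModel.

(* a g / (g b) = a / b for g <> 0, also when b = 0 (both sides are then 0). *)
Lemma Rdiv_cancel_factor (a b g : R) : g <> 0 -> a * g / (g * b) = a / b.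
Proof.
  intros Hg; unfold Rdiv.
  rewrite Rinv_mult, <- Rmult_assoc, (Rmult_assoc a g), Rinv_r, Rmult_1_r by exact Hg.
  reflexivity.
Qed.

Theorem mainTheorem2 (p : nat -> R) (N : nat) (S G Rv : nat -> nat)
    (Pv : nat -> nat -> nat) (r : nat -> R) (i : nat) :
  prob_mass p ->
  (1 <= N)%nat ->
  (forall e, 0 < Prob p (fun w => S w = e) -> 0 < Prob p (fun w => G w = e)) ->
  database_model p N Rv Pv S G ->
  0 < Prob p (LRD_event p S G Pv N r) ->
  (1 <= i <= N)%nat ->
  0 < pi p Rv i < 1 ->
  CondProb p (fun w => Rv w = i) (LRD_event p S G Pv N r)
    / CondProb p (fun w => Rv w <> i) (LRD_event p S G Pv N r)
  = r i * pi p Rv i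
    / (1 * pi p Rv 0 + sum1 N (fun k => if Nat.eq_dec k i then 0 else r k * pi p Rv k))
  /\
  (CondProb p (LRD_event p S G Pv N r) (fun w => Rv w <> i) <> 0 ->
   sum1 N (fun k => if Nat.eq_dec k i then 0 else r k * pi p Rv k) + pi p Rv 0 <> 0 ->
   CondProb p (LRD_event p S G Pv N r) (fun w => Rv w = i)
     / CondProb p (LRD_event p S G Pv N r) (fun w => Rv w <> i)
   = r i * (1 - pi p Rv i)
     / (sum1 N (fun k => if Nat.eq_dec k i then 0 else r k * pi p Rv k) + pi p Rv 0)).
Proof.
  intros Hm _ Habs Hmodel HL Hi Hpi.
  set (L := LRD_event p S G Pv N r) in *.
  set (g := null_likelihood p N S G r).
  set (s := sum1 N (fun k => if Nat.eq_dec k i then 0 else r k * pi p Rv k)).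
  assert (joint_i : Prob p (fun w => Rv w = i /\ L w) = pi p Rv i * r i * g).
  { unfold L, g; rewrite Prob_R_and_LRD by (auto; lia). destruct (Nat.eq_dec i 0); [lia|reflexivity]. }
  assert (joint_not_i : Prob p (fun w => Rv w <> i /\ L w) = g * (pi p Rv 0 + s))
    by (apply Prob_not_R_and_LRD; auto).
  assert (g_nonzero : g <> 0).
  { intros Hg0. rewrite (Prob_split p Hm (fun w => Rv w = i)), joint_i, joint_not_i, Hg0 in HL. lra. }
  split.
  - rewrite CondProb_odds, joint_i, joint_not_i, Rmult_1_l by (auto; lra).
    rewrite Rdiv_cancel_factor by exact g_nonzero. f_equal; ring.
  - intros _ _.
    assert (prior_i : Prob p (fun w => Rv w = i) = pi p Rv i) by reflexivity.
    assert (prior_not_i : Prob p (fun w => Rv w <> i) = 1 - pi p Rv i)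
      by apply (Prob_complement p Hm (fun w => Rv w = i)).
    rewrite CondProb_likelihood_ratio, joint_i, joint_not_i, Rdiv_cancel_factor, prior_i, prior_not_i
      by (rewrite ?prior_i, ?prior_not_i; auto; lra).
    rewrite (Rplus_comm s). unfold Rdiv. set (total_inv := / (pi p Rv 0 + s)). field. lra.
Qed.
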